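(* Fix $\alpha>1$, $R>0$, $N_0,B,T_c>0$ with $T=BT_c>1$, and $p_r,p_d,p_s,C_0>0$. Let $\beta=p_d/p_r$, $\delta=p_s/p_r$, $\mu=C_0B/p_r$ and $K_{max}=\min\big(\frac T4,\frac1{3\mu},\frac{3\beta}{2\mu}\big)$, and assume $K_{max}>10$. For $G_c>0$ let $\Theta(G_c)=(\alpha,\rho_r,\rho_d,\rho_s,\rho_0,T)$ with $\rho_r=\frac{G_cp_r}{N_0B}$, $\rho_d=\frac{G_cp_d}{N_0B}$, $\rho_s=\frac{G_cp_s}{N_0B}$, $\rho_0=\frac{G_cC_0}{N_0}$, and let $\eta'_{csi}(G_c)=\frac{G_c}{N_0}\zeta'_{csi}(R,\Theta(G_c))$. Then for every $G_c$ satisfying $$G_c>\frac{N_0B}{p_r}\frac{\alpha}{2\delta},\quad G_c>\frac{N_0B}{p_r}\frac{3\alpha}{4(1+\beta)^2R}g^2\Big(\frac{4R}{3K_{max}}\Big),\quad G_c<\frac{N_0B}{p_r}\frac{\alpha}{(1+\beta)^2R}g^2(R),$$ we have $\frac{\partial\eta'_{csi}}{\partial G_c}>0$.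
   Context: $g(x)=\sqrt{\frac{x}{2^x-1}}\big(2^x x\ln2-2^x+1\big)$, $x>0$. For $\Theta=(\alpha,\rho_r,\rho_d,\rho_s,\rho_0,T)$ and real $M>K\ge1$, $\frac{1}{\zeta_{csi}(M,K,R,\Theta)}=\frac1R\big[\frac{\alpha K}{M-K}(2^{R/K}-1)+M\rho_r+K\rho_d+\rho_s\big]$, and $\zeta'_{csi}(R,\Theta)$ is the maximum of $\zeta_{csi}(M,K,R,\Theta)$ over real $(M,K)$ with $1\le K\le \min\big(\frac T4,\frac{\rho_r}{3\rho_0},\frac{3\rho_d}{2\rho_0}\big)$, $M>K$ (note this upper limit equals $K_{max}$ above, independent of $G_c$). *)

From Stdlib Require Import Reals.
From Coquelicot Require Import Coquelicot.
Open Scope R_scope.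

Definition pow2 (x : R) : R := Rpower 2 x.

Definition g (x : R) : R :=
  sqrt (x / (pow2 x - 1)) * (pow2 x * x * ln 2 - pow2 x + 1).

Definition inv_zeta_csi (M K Rt alpha rr rd rs : R) : R :=
  / Rt * (alpha * K / (M - K) * (pow2 (Rt / K) - 1) + M * rr + K * rd + rs).

Definition zeta_csi (M K Rt alpha rr rd rs : R) : R :=
  / inv_zeta_csi M K Rt alpha rr rd rs.

Definition K_upper (rr rd r0 T : R) : R :=
  Rmin (Rmin (T / 4) (rr / (3 * r0))) (3 * rd / (2 * r0)).

Definition zeta_values (Rt alpha rr rd rs r0 T : R) (z : R) : Prop :=
  exists M K : R, 1 <= K /\ K <= K_upper rr rd r0 T /\ M > K /\
    z = zeta_csi M K Rt alpha rr rd rs.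

(* zeta'_csi(R,Theta): the maximum (taken as the supremum) of zeta_csi over
   the feasible real (M,K). *)
Definition zeta'_csi (Rt alpha rr rd rs r0 T : R) : R :=
  real (Lub_Rbar (zeta_values Rt alpha rr rd rs r0 T)).

Definition eta'_csi (Rt alpha N0 B T pr pd ps C0 : R) (Gc : R) : R :=
  Gc / N0 * zeta'_csi Rt alpha (Gc * pr / (N0 * B)) (Gc * pd / (N0 * B))
                       (Gc * ps / (N0 * B)) (Gc * C0 / N0) T.

Definition K_max (T beta mu : R) : R :=
  Rmin (Rmin (T / 4) (1 / (3 * mu))) (3 * beta / (2 * mu)).

(* Optimising over [M] by AM-GM turns the scaled efficiency into
   [eta'(G) = B R / min_{1 <= K <= Kmax} F_{s(G)}(K)], with
   [F_s(K) = 2 s sqrt (K (2^(R/K) - 1)) + (p_r + p_d) K + p_s] and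
   [s(G) = sqrt (alpha p_r N0 B / G)].  The slope of [F_s] at [K] has the sign of
   [(p_r + p_d)^2 R - s^2 g(R/K)^2], and [g^2] as well as [g^2(x)/x] increase, so
   [F_s] is unimodal; the two bounds on [G_c] put its minimiser [K0] strictly
   inside [(1, Kmax)].  Since this minimum is strict, perturbing [s] moves the
   minimal value only to second order (an envelope argument), so [eta'] has at
   [G_c] the derivative of [G |-> B R / F_{s(G)}(K0)], which is positive because
   [s] decreases in [G]. *)

From Stdlib Require Import Reals Lra.
From Coquelicot Require Import Coquelicot.
Open Scope R_scope.

Lemma lt_of_is_derive_pos (f df : R -> R) (a b : R) : a < b ->
  (forall x, a <= x <= b -> is_derive f x (df x)) ->
  (forall x, a < x < b -> 0 < df x) -> f a < f b.
Proof.
  intros Hab Hf Hdf.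
  destruct (MVT_cor2 f df a b Hab) as [c [Hc Hac]].
  { intros c Hc; apply is_derive_Reals, Hf; exact Hc. }
  specialize (Hdf c Hac); nra.
Qed.

Lemma lt_of_is_derive_neg (f df : R -> R) (a b : R) : a < b ->
  (forall x, a <= x <= b -> is_derive f x (df x)) ->
  (forall x, a < x < b -> df x < 0) -> f b < f a.
Proof.
  intros Hab Hf Hdf.
  destruct (MVT_cor2 f df a b Hab) as [c [Hc Hac]].
  { intros c Hc; apply is_derive_Reals, Hf; exact Hc. }
  specialize (Hdf c Hac); nra.
Qed.

Lemma is_derive_locally_lipschitz (f : R -> R) (x l : R) : is_derive f x l ->
  exists d, 0 < d /\ forall y, Rabs (y - x) < d ->
    Rabs (f y - f x) <= (Rabs l + 1) * Rabs (y - x).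
Proof.
  intros Hf; apply is_derive_Reals in Hf.
  destruct (Hf 1 Rlt_0_1) as [d Hd].
  exists d; split; [apply cond_pos|].
  intros y Hy.
  destruct (Req_dec y x) as [-> | Hne].
  { rewrite !Rminus_diag, Rabs_R0; lra. }
  specialize (Hd (y - x) ltac:(lra) Hy).
  replace (x + (y - x)) with y in Hd by ring.
  replace (f y - f x) with (((f y - f x) / (y - x) - l) * (y - x) + l * (y - x))
    by (field; lra).
  eapply Rle_trans; [apply Rabs_triang|].
  rewrite !Rabs_mult; pose proof (Rabs_pos (y - x)); nra.
Qed.

Lemma is_derive_continuous_eps (f : R -> R) (x l : R) : is_derive f x l ->
  forall eps, 0 < eps -> exists th, 0 < th /\
    forall y, Rabs (y - x) < th -> Rabs (f y - f x) <= eps.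
Proof.
  intros Hf eps Heps.
  destruct (is_derive_locally_lipschitz f x l Hf) as [d [Hd Hlip]].
  assert (HL : 0 < Rabs l + 1) by (pose proof (Rabs_pos l); lra).
  exists (Rmin d (eps / (Rabs l + 1))); split.
  { apply Rmin_glb_lt; [lra | apply Rdiv_lt_0_compat; lra]. }
  intros y Hy.
  apply (Rle_trans _ _ _ (Hlip y (Rlt_le_trans _ _ _ Hy (Rmin_l _ _)))).
  replace eps with ((Rabs l + 1) * (eps / (Rabs l + 1))) by (field; lra).
  apply Rmult_le_compat_l; [lra|].
  apply Rlt_le, (Rlt_le_trans _ _ _ Hy (Rmin_r _ _)).
Qed.

Lemma is_derive_squeeze (E ph : R -> R) (x l : R) : is_derive ph x l ->
  (forall eps, 0 < eps -> exists d, 0 < d /\ forall y, Rabs (y - x) < d ->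
     Rabs (E y - ph y) <= eps * Rabs (y - x)) ->
  is_derive E x l.
Proof.
  intros Hph HE; apply is_derive_Reals in Hph; apply is_derive_Reals.
  intros eps Heps.
  destruct (Hph (eps / 2) ltac:(lra)) as [d1 Hd1].
  destruct (HE (eps / 4) ltac:(lra)) as [d2 [Hd2 HEd]].
  assert (Hx : E x = ph x).
  { specialize (HEd x); rewrite Rminus_diag, Rabs_R0, Rmult_0_r in HEd.
    pose proof (Rabs_pos (E x - ph x)).
    apply Rminus_diag_uniq, Rabs_eq_0; apply Rle_antisym; [apply HEd|]; lra. }
  assert (Hd : 0 < Rmin d1 d2) by (apply Rmin_glb_lt; [apply cond_pos | lra]).
  exists (mkposreal _ Hd); intros h Hh0 Hh; simpl in Hh.
  specialize (Hd1 h Hh0 (Rlt_le_trans _ _ _ Hh (Rmin_l _ _))).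
  specialize (HEd (x + h)); replace (x + h - x) with h in HEd by ring.
  specialize (HEd (Rlt_le_trans _ _ _ Hh (Rmin_r _ _))).
  assert (Hh' : 0 < Rabs h) by (apply Rabs_pos_lt; exact Hh0).
  replace ((E (x + h) - E x) / h - l)
    with (((ph (x + h) - ph x) / h - l) + (E (x + h) - ph (x + h)) / h)
    by (rewrite Hx; field; exact Hh0).
  eapply Rle_lt_trans; [apply Rabs_triang|].
  assert (Rabs ((E (x + h) - ph (x + h)) / h) <= eps / 4).
  { unfold Rdiv; rewrite Rabs_mult, Rabs_inv.
    apply (Rmult_le_reg_r (Rabs h)); [exact Hh'|].
    rewrite Rmult_assoc, Rinv_l by lra; lra. }
  lra.
Qed.

Lemma perturbed_min_stable (S : R -> Prop) (f q : R -> R) (x0 C : R) :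
  (forall x, S x -> f x0 <= f x) ->
  (forall x, S x -> Rabs (q x - q x0) <= C) ->
  (forall eps, 0 < eps -> exists th, 0 < th /\
     forall x, S x -> Rabs (x - x0) < th -> Rabs (q x - q x0) <= eps) ->
  (forall th, 0 < th -> exists d, 0 < d /\
     forall x, S x -> th <= Rabs (x - x0) -> f x0 + d <= f x) ->
  forall eps, 0 < eps -> exists del, 0 < del /\ forall t x, Rabs t < del -> S x ->
    f x0 + t * q x0 - eps * Rabs t <= f x + t * q x.
Proof.
  intros Hmin Hbound Hcont Hsep eps Heps.
  destruct (Hcont eps Heps) as [th [Hth Hnear]].
  destruct (Hsep th Hth) as [d [Hd Hfar]].
  exists (d / (Rabs C + 1)); split; [apply Rdiv_lt_0_compat; pose proof (Rabs_pos C); lra|].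
  intros t x Ht Hx.
  assert (Hshift : t * (q x0 - q x) <= Rabs t * Rabs (q x - q x0)).
  { rewrite (Rabs_minus_sym (q x)), <- Rabs_mult; apply Rle_abs. }
  pose proof (Rabs_pos t); pose proof (Rabs_pos (q x - q x0)).
  destruct (Rlt_or_le (Rabs (x - x0)) th) as [Hx0 | Hx0].
  - specialize (Hnear x Hx Hx0); specialize (Hmin x Hx); nra.
  - specialize (Hfar x Hx Hx0); specialize (Hbound x Hx).
    assert (Rabs t * (Rabs C + 1) < d).
    { apply (Rmult_lt_compat_r (Rabs C + 1)) in Ht; [|pose proof (Rabs_pos C); lra].
      unfold Rdiv in Ht; rewrite Rmult_assoc, Rinv_l in Ht; pose proof (Rabs_pos C); lra. }
    pose proof (Rle_abs C); nra.
Qed.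

Lemma Rdiv_sub_Rdiv_le (u a b c : R) : 0 < u -> 0 < c -> c <= a <= b ->
  u / a - u / b <= u / c ^ 2 * (b - a).
Proof.
  intros Hu Hc Hab.
  replace (u / a - u / b) with (u * (b - a) / (a * b)) by (field; lra).
  replace (u / c ^ 2 * (b - a)) with (u * (b - a) / c ^ 2) by (field; lra).
  apply Rmult_le_compat_l; [nra|].
  apply Rinv_le_contravar; [apply pow_lt; lra | nra].
Qed.

Lemma amgm_div (m b u : R) : 0 < b -> 0 < u -> 2 * m <= m ^ 2 / (b * u) + b * u.
Proof.
  intros Hb Hu.
  assert (0 <= (b * u - m) ^ 2 / (b * u))
    by (apply Rdiv_le_0_compat; [apply pow2_ge_0 | nra]).
  replace (m ^ 2 / (b * u) + b * u) with (2 * m + (b * u - m) ^ 2 / (b * u))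
    by (field; lra).
  lra.
Qed.

Lemma lub_between (S : R -> Prop) (z u : R) : S z -> (forall y, S y -> y <= u) ->
  z <= real (Lub_Rbar S) <= u.
Proof.
  intros Hz Hu; destruct (Lub_Rbar_correct S) as [Hub Hlub].
  specialize (Hub z Hz); specialize (Hlub (Finite u) Hu).
  destruct (Lub_Rbar S); simpl in *; tauto.
Qed.

Lemma ln2_pos : 0 < ln 2.
Proof. rewrite <- ln_1; apply ln_increasing; lra. Qed.

Lemma pow2_gt_1 (x : R) : 0 < x -> 1 < pow2 x.
Proof. intros Hx; rewrite <- (Rpower_O 2) by lra; apply Rpower_lt; lra. Qed.

Lemma pow2_le_compat (x y : R) : x <= y -> pow2 x <= pow2 y.
Proof. intros Hxy; apply Rle_Rpower; lra. Qed.

Definition gnum (x : R) : R := pow2 x * x * ln 2 - pow2 x + 1.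

Lemma gnum_pos (x : R) : 0 < x -> 0 < gnum x.
Proof.
  intros Hx; unfold gnum, pow2, Rpower.
  pose proof ln2_pos.
  set (y := x * ln 2).
  assert (Hy : 0 < y) by (unfold y; nra).
  (* [gnum x = e^y (y - 1) + 1], and [e^-y > 1 - y] *)
  assert (Hinv : 1 + - y < exp (- y)) by (apply exp_ineq1; lra).
  assert (Hexp : exp y * exp (- y) = 1) by (rewrite <- exp_plus, Rplus_opp_r; apply exp_0).
  pose proof (exp_pos y).
  replace (exp y * x * ln 2) with (y * exp y) by (unfold y; ring).
  nra.
Qed.

Definition gsq_ratio (x : R) : R := gnum x ^ 2 / (pow2 x - 1).

Lemma g_sq (x : R) : 0 < x -> g x ^ 2 = x * gsq_ratio x.
Proof.
  intros Hx; pose proof (pow2_gt_1 x Hx).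
  unfold g, gsq_ratio; fold (gnum x).
  rewrite Rpow_mult_distr, pow2_sqrt.
  - field; lra.
  - apply Rlt_le, Rdiv_lt_0_compat; lra.
Qed.

Definition gsq_ratio' (x : R) : R :=
  gnum x * pow2 x * ln 2 * (2 * x * ln 2 * (pow2 x - 1) - gnum x) / (pow2 x - 1) ^ 2.

Lemma gsq_ratio_derive (x : R) : 0 < x -> is_derive gsq_ratio x (gsq_ratio' x).
Proof.
  intros Hx; pose proof (pow2_gt_1 x Hx).
  unfold gsq_ratio, gsq_ratio', gnum, pow2, Rpower in *.
  auto_derive; [lra | field; lra].
Qed.

Lemma gsq_ratio_increasing (a b : R) : 0 < a -> a < b -> gsq_ratio a < gsq_ratio b.
Proof.
  intros Ha Hab.
  apply (lt_of_is_derive_pos gsq_ratio gsq_ratio' a b Hab).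
  { intros x Hx; apply gsq_ratio_derive; lra. }
  intros x Hx; unfold gsq_ratio'.
  assert (Hx0 : 0 < x) by lra.
  pose proof (pow2_gt_1 x Hx0) as Hp; pose proof (gnum_pos x Hx0); pose proof ln2_pos.
  assert (Hpos : 0 < 2 * x * ln 2 * (pow2 x - 1) - gnum x).
  { (* with [y = x ln 2]: [2y(e^y - 1) - gnum x = e^y (1 + y) - (1 + 2y)] and [e^y > 1 + y] *)
    unfold gnum; unfold pow2, Rpower in *.
    set (y := x * ln 2) in *.
    assert (Hy : 0 < y) by (unfold y; nra).
    assert (Hey : 1 + y < exp y) by (apply exp_ineq1; lra).
    replace (2 * x * ln 2 * (exp y - 1) - (exp y * x * ln 2 - exp y + 1))
      with (exp y * (1 + y) - (1 + 2 * y)) by (unfold y; ring).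
    nra. }
  apply Rdiv_lt_0_compat; [| apply pow_lt; lra].
  repeat apply Rmult_lt_0_compat; lra.
Qed.

Lemma g_sq_mul_lt (a b : R) : 0 < a -> a < b -> g a ^ 2 * b < g b ^ 2 * a.
Proof.
  intros Ha Hab; rewrite (g_sq a Ha), (g_sq b) by lra.
  pose proof (gsq_ratio_increasing a b Ha Hab).
  assert (0 < a * b) by nra.
  nra.
Qed.

Lemma g_sq_lt (a b : R) : 0 < a -> a < b -> g a ^ 2 < g b ^ 2.
Proof.
  intros Ha Hab; pose proof (g_sq_mul_lt a b Ha Hab).
  assert (0 <= g b ^ 2) by (rewrite <- Rsqr_pow2; apply Rle_0_sqr).
  nra.
Qed.

Definition rate_term (Rt K : R) : R := sqrt (K * (pow2 (Rt / K) - 1)).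

Definition reduced_cost (Rt kap ps s K : R) : R := 2 * s * rate_term Rt K + kap * K + ps.

Definition reduced_cost_slope (Rt kap s K : R) : R := kap - s * gnum (Rt / K) / rate_term Rt K.

Definition descent_margin (Rt kap s K : R) : R := s ^ 2 * g (Rt / K) ^ 2 - kap ^ 2 * Rt.

Section ReducedCost.

Variables (Rt kap ps : R).
Hypotheses (HRt : 0 < Rt) (Hkap : 0 < kap).

Lemma rate_term_arg_pos (K : R) : 0 < K -> 0 < K * (pow2 (Rt / K) - 1).
Proof.
  intros HK; pose proof (pow2_gt_1 (Rt / K) (Rdiv_lt_0_compat _ _ HRt HK)); nra.
Qed.

Lemma rate_term_pos (K : R) : 0 < K -> 0 < rate_term Rt K.
Proof. intros HK; apply sqrt_lt_R0, rate_term_arg_pos, HK. Qed.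

Lemma rate_term_sq (K : R) : 0 < K -> rate_term Rt K ^ 2 = K * (pow2 (Rt / K) - 1).
Proof. intros HK; apply pow2_sqrt, Rlt_le, rate_term_arg_pos, HK. Qed.

Lemma rate_term_le (Km K : R) : 1 <= K <= Km -> rate_term Rt K <= sqrt (Km * pow2 Rt).
Proof.
  intros HK; apply sqrt_le_1_alt.
  assert (pow2 (Rt / K) <= pow2 Rt).
  { apply pow2_le_compat; unfold Rdiv.
    rewrite <- (Rmult_1_r Rt) at 2; apply Rmult_le_compat_l; [lra|].
    rewrite <- Rinv_1; apply Rinv_le_contravar; lra. }
  pose proof (pow2_gt_1 (Rt / K) (Rdiv_lt_0_compat Rt K HRt ltac:(lra))); nra.
Qed.

(* d/dK [K (2^(Rt/K) - 1)] = - gnum (Rt/K) *)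
Lemma rate_term_derive (K : R) : 0 < K ->
  is_derive (rate_term Rt) K (- gnum (Rt / K) / (2 * rate_term Rt K)).
Proof.
  intros HK; pose proof (rate_term_arg_pos K HK); pose proof (rate_term_pos K HK).
  unfold rate_term, gnum, pow2, Rpower, Rdiv, Rminus in *.
  auto_derive; [repeat split; lra | field; lra].
Qed.

Lemma reduced_cost_derive (s K : R) : 0 < K ->
  is_derive (reduced_cost Rt kap ps s) K (reduced_cost_slope Rt kap s K).
Proof.
  intros HK; pose proof (rate_term_pos K HK).
  pose proof (rate_term_derive K HK) as HQ.
  unfold reduced_cost, reduced_cost_slope; auto_derive.
  - exists (- gnum (Rt / K) / (2 * rate_term Rt K)); exact HQ.
  - replace (Derive (fun x => rate_term Rt x) K) with (- gnum (Rt / K) / (2 * rate_term Rt K))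
      by (symmetry; apply is_derive_unique, HQ).
    field; lra.
Qed.

Lemma reduced_cost_slope_sign (s K : R) : 0 < s -> 0 < K ->
  (0 < descent_margin Rt kap s K -> reduced_cost_slope Rt kap s K < 0) /\
  (descent_margin Rt kap s K < 0 -> 0 < reduced_cost_slope Rt kap s K).
Proof.
  intros Hs HK; unfold reduced_cost_slope.
  assert (HRK : 0 < Rt / K) by (apply Rdiv_lt_0_compat; lra).
  pose proof (pow2_gt_1 _ HRK); pose proof (gnum_pos _ HRK).
  pose proof (rate_term_pos K HK) as HQ; pose proof (rate_term_sq K HK) as HQ2.
  assert (HsPQ : 0 < s * gnum (Rt / K) / rate_term Rt K)
    by (apply Rdiv_lt_0_compat; [apply Rmult_lt_0_compat|]; lra).
  assert (Hprod : (kap - s * gnum (Rt / K) / rate_term Rt K)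
                  * (kap + s * gnum (Rt / K) / rate_term Rt K)
                  = - descent_margin Rt kap s K / Rt).
  { unfold descent_margin; rewrite (g_sq _ HRK); unfold gsq_ratio.
    replace ((kap - s * gnum (Rt / K) / rate_term Rt K)
             * (kap + s * gnum (Rt / K) / rate_term Rt K))
      with (kap ^ 2 - s ^ 2 * gnum (Rt / K) ^ 2 / rate_term Rt K ^ 2) by (field; lra).
    rewrite HQ2; field; lra. }
  split; intros Hm.
  - assert (- descent_margin Rt kap s K / Rt < 0)
      by (apply Rdiv_neg_pos; lra).
    nra.
  - assert (0 < - descent_margin Rt kap s K / Rt)
      by (apply Rdiv_lt_0_compat; lra).
    nra.
Qed.

Lemma descent_margin_decreasing (s a b : R) : 0 < s -> 0 < a -> a < b ->
  descent_margin Rt kap s b < descent_margin Rt kap s a.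
Proof.
  intros Hs Ha Hab; unfold descent_margin.
  assert (Hba : Rt / b < Rt / a)
    by (apply Rmult_lt_compat_l; [lra | apply Rinv_lt_contravar; nra]).
  assert (Hb : 0 < Rt / b) by (apply Rdiv_lt_0_compat; lra).
  pose proof (g_sq_lt (Rt / b) (Rt / a) Hb Hba).
  assert (0 < s ^ 2) by (apply pow_lt; lra).
  nra.
Qed.

Lemma descent_margin_continuous (s K : R) : 0 < K -> continuity_pt (descent_margin Rt kap s) K.
Proof.
  intros HK; apply continuity_pt_filterlim, (ex_derive_continuous (K := R_AbsRing) (V := R_NormedModule)).
  assert (HRK : 0 < Rt / K) by (apply Rdiv_lt_0_compat; lra).
  pose proof (pow2_gt_1 _ HRK).
  assert (0 < Rt / K / (pow2 (Rt / K) - 1)) by (apply Rdiv_lt_0_compat; lra).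
  unfold descent_margin, g, pow2, Rpower, Rdiv, Rminus in *.
  auto_derive; repeat split; lra.
Qed.

Lemma descent_margin_root (s Km : R) : 1 < Km ->
  0 < descent_margin Rt kap s 1 -> descent_margin Rt kap s Km < 0 ->
  exists K0, 1 < K0 < Km /\ descent_margin Rt kap s K0 = 0.
Proof.
  intros HKm H1 HKm0.
  destruct (Ranalysis5.IVT_interv (fun K => - descent_margin Rt kap s K) 1 Km)
    as [K0 [HK0 Hroot]]; try lra.
  - intros K HK; apply continuity_pt_opp, descent_margin_continuous; lra.
  - exists K0; split; [| lra].
    destruct (Req_dec K0 1); destruct (Req_dec K0 Km); subst; lra.
Qed.

Section Minimum.

Variables (s K0 : R).
Hypotheses (Hs : 0 < s) (HK0 : 0 < K0) (Hroot : descent_margin Rt kap s K0 = 0).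

Lemma reduced_cost_decreasing (a b : R) : 0 < a -> a < b -> b <= K0 ->
  reduced_cost Rt kap ps s b < reduced_cost Rt kap ps s a.
Proof.
  intros Ha Hab Hb.
  apply (lt_of_is_derive_neg _ (reduced_cost_slope Rt kap s) a b Hab).
  - intros x Hx; apply reduced_cost_derive; lra.
  - intros x Hx; apply (reduced_cost_slope_sign s x Hs ltac:(lra)).
    rewrite <- Hroot; apply descent_margin_decreasing; lra.
Qed.

Lemma reduced_cost_increasing (a b : R) : K0 <= a -> a < b ->
  reduced_cost Rt kap ps s a < reduced_cost Rt kap ps s b.
Proof.
  intros Ha Hab.
  apply (lt_of_is_derive_pos _ (reduced_cost_slope Rt kap s) a b Hab).
  - intros x Hx; apply reduced_cost_derive; lra.
  - intros x Hx; apply (reduced_cost_slope_sign s x Hs ltac:(lra)).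
    rewrite <- Hroot; apply descent_margin_decreasing; lra.
Qed.

Lemma reduced_cost_min (K : R) : 0 < K ->
  reduced_cost Rt kap ps s K0 <= reduced_cost Rt kap ps s K.
Proof.
  intros HK; destruct (Rtotal_order K K0) as [Hlt | [-> | Hgt]].
  - left; apply reduced_cost_decreasing; lra.
  - lra.
  - left; apply reduced_cost_increasing; lra.
Qed.

Lemma reduced_cost_separated (th : R) : 0 < th -> exists d, 0 < d /\
  forall K, 0 < K -> th <= Rabs (K - K0) ->
    reduced_cost Rt kap ps s K0 + d <= reduced_cost Rt kap ps s K.
Proof.
  intros Hth.
  set (th' := Rmin th (K0 / 2)).
  assert (Hth' : 0 < th' <= K0 / 2)
    by (split; [apply Rmin_glb_lt; lra | apply Rmin_r]).
  pose proof (Rmin_l th (K0 / 2)) as Hth'th; fold th' in Hth'th.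
  set (f := reduced_cost Rt kap ps s).
  exists (Rmin (f (K0 - th') - f K0) (f (K0 + th') - f K0)); split.
  { apply Rmin_glb_lt.
    - enough (f K0 < f (K0 - th')) by lra; apply reduced_cost_decreasing; lra.
    - enough (f K0 < f (K0 + th')) by lra; apply reduced_cost_increasing; lra. }
  intros K HK Hfar.
  destruct (Rle_or_lt K K0) as [HKle | HKgt].
  - rewrite Rabs_left1 in Hfar by lra.
    assert (f (K0 - th') <= f K).
    { destruct (Req_dec K (K0 - th')) as [-> | Hne]; [lra|].
      left; apply reduced_cost_decreasing; lra. }
    pose proof (Rmin_l (f (K0 - th') - f K0) (f (K0 + th') - f K0)); unfold f in *; lra.
  - rewrite Rabs_right in Hfar by lra.
    assert (f (K0 + th') <= f K).
    { destruct (Req_dec K (K0 + th')) as [-> | Hne]; [lra|].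
      left; apply reduced_cost_increasing; lra. }
    pose proof (Rmin_r (f (K0 - th') - f K0) (f (K0 + th') - f K0)); unfold f in *; lra.
Qed.

Lemma reduced_cost_perturbed (Km eps : R) : 0 < eps -> exists del, 0 < del /\
  forall s' K, Rabs (s' - s) < del -> 1 <= K <= Km ->
    reduced_cost Rt kap ps s' K0 - eps * Rabs (s' - s) <= reduced_cost Rt kap ps s' K.
Proof.
  intros Heps.
  set (q := fun K => 2 * rate_term Rt K).
  assert (Hq : forall s' K, reduced_cost Rt kap ps s' K
                            = reduced_cost Rt kap ps s K + (s' - s) * q K)
    by (intros; unfold reduced_cost, q; ring).
  destruct (perturbed_min_stable (fun K => 1 <= K <= Km) (reduced_cost Rt kap ps s) q K0
              (2 * sqrt (Km * pow2 Rt) + 2 * rate_term Rt K0)) with eps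
    as [del [Hdel Hstable]]; [| | | | exact Heps |].
  - intros K HK; apply reduced_cost_min; lra.
  - intros K HK; unfold q.
    pose proof (rate_term_le Km K HK); pose proof (rate_term_pos K ltac:(lra));
      pose proof (rate_term_pos K0 HK0).
    apply Rabs_le; lra.
  - intros e He.
    destruct (is_derive_continuous_eps q K0 _ (is_derive_scal _ _ 2 _ (rate_term_derive K0 HK0))
                e He) as [th [Hth Hcont]].
    exists th; split; [exact Hth|]; intros K _; apply Hcont.
  - intros th Hth; destruct (reduced_cost_separated th Hth) as [d [Hd Hsep]].
    exists d; split; [exact Hd|]; intros K HK; apply Hsep; lra.
  - exists del; split; [exact Hdel|]; intros s' K Hs' HK.
    specialize (Hstable (s' - s) K Hs' HK).
    rewrite !(Hq s'); lra.
Qed.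

End Minimum.

End ReducedCost.

Definition cost_scale (alpha pr N0 B G : R) : R := sqrt (alpha * pr * N0 * B / G).

Section Scaling.

Variables (alpha Rt N0 B T pr pd ps C0 : R).
Hypotheses (Halpha : 0 < alpha) (HRt : 0 < Rt) (HN0 : 0 < N0) (HB : 0 < B)
  (Hpr : 0 < pr) (Hpd : 0 < pd) (Hps : 0 < ps) (HC0 : 0 < C0).

Let s := cost_scale alpha pr N0 B.
Let Km := K_max T (pd / pr) (C0 * B / pr).

Lemma cost_scale_pos (G : R) : 0 < G -> 0 < s G.
Proof. intros HG; apply sqrt_lt_R0, Rdiv_lt_0_compat; [repeat apply Rmult_lt_0_compat |]; lra. Qed.

Lemma cost_scale_sq (G : R) : 0 < G -> s G ^ 2 = alpha * pr * N0 * B / G.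
Proof.
  intros HG; apply pow2_sqrt, Rlt_le, Rdiv_lt_0_compat; [repeat apply Rmult_lt_0_compat |]; lra.
Qed.

Lemma cost_scale_derive (G : R) : 0 < G -> is_derive s G (- s G / (2 * G)).
Proof.
  intros HG; pose proof (cost_scale_pos G HG).
  assert (0 < alpha * pr * N0 * B / G) by (apply Rdiv_lt_0_compat; [repeat apply Rmult_lt_0_compat |]; lra).
  unfold s, cost_scale in *; unfold Rdiv in *.
  auto_derive; [lra |].
  replace (alpha * pr * N0 * B * (- (1) * / (G * G)))
    with (- (alpha * pr * N0 * B * / G) * / G) by (field; lra).
  rewrite <- (sqrt_sqrt (alpha * pr * N0 * B * / G)) at 1 by lra.
  field; lra.
Qed.

(* turns the paper's bounds on [G] into sign conditions on [s G ^ 2 X - (pr + pd)^2 Rt] *)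
Lemma cost_scale_threshold (G X : R) : 0 < G ->
  s G ^ 2 * X - (pr + pd) ^ 2 * Rt
  = (pr + pd) ^ 2 * Rt / G * (N0 * B / pr * (alpha / ((1 + pd / pr) ^ 2 * Rt) * X) - G).
Proof.
  intros HG; rewrite cost_scale_sq by exact HG.
  assert (0 < pd / pr) by (apply Rdiv_lt_0_compat; lra).
  field; repeat split; lra.
Qed.

Lemma scaled_zeta_csi (G M K : R) : 0 < G -> 0 < K -> K < M ->
  G / N0 * zeta_csi M K Rt alpha (G * pr / (N0 * B)) (G * pd / (N0 * B)) (G * ps / (N0 * B))
  = B * Rt / ((s G * rate_term Rt K) ^ 2 / (pr * (M - K)) + pr * (M - K) + (pr + pd) * K + ps).
Proof.
  intros HG HK HKM.
  assert (Hq : 0 < rate_term Rt K ^ 2) by (apply pow_lt, rate_term_pos; lra).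
  rewrite Rpow_mult_distr, cost_scale_sq by exact HG.
  pose proof (rate_term_sq Rt HRt K HK) as HQ2.
  set (D := (alpha * pr * N0 * B / G * rate_term Rt K ^ 2) / (pr * (M - K)) + pr * (M - K)
            + (pr + pd) * K + ps).
  assert (HD : 0 < D).
  { unfold D; assert (0 < alpha * pr * N0 * B / G * rate_term Rt K ^ 2 / (pr * (M - K))).
    { apply Rdiv_lt_0_compat; [apply Rmult_lt_0_compat|]; [| lra | nra].
      apply Rdiv_lt_0_compat; [repeat apply Rmult_lt_0_compat|]; lra. }
    nra. }
  unfold zeta_csi, inv_zeta_csi.
  replace (alpha * K / (M - K) * (pow2 (Rt / K) - 1) + M * (G * pr / (N0 * B))
           + K * (G * pd / (N0 * B)) + G * ps / (N0 * B))
    with (G / (N0 * B) * D) by (unfold D; rewrite HQ2; field; repeat split; lra).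
  field; repeat split; lra.
Qed.

Lemma scaled_zeta_csi_le (G M K : R) : 0 < G -> 0 < K -> K < M ->
  G / N0 * zeta_csi M K Rt alpha (G * pr / (N0 * B)) (G * pd / (N0 * B)) (G * ps / (N0 * B))
  <= B * Rt / reduced_cost Rt (pr + pd) ps (s G) K.
Proof.
  intros HG HK HKM; rewrite scaled_zeta_csi by assumption.
  pose proof (cost_scale_pos G HG); pose proof (rate_term_pos Rt HRt K HK).
  pose proof (amgm_div (s G * rate_term Rt K) pr (M - K) Hpr ltac:(lra)).
  assert (0 < reduced_cost Rt (pr + pd) ps (s G) K) by (unfold reduced_cost; nra).
  apply Rmult_le_compat_l; [nra|].
  apply Rinv_le_contravar; [lra|].
  unfold reduced_cost; lra.
Qed.

Lemma scaled_zeta_csi_opt (G K : R) : 0 < G -> 0 < K ->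
  let M := K + s G * rate_term Rt K / pr in
  G / N0 * zeta_csi M K Rt alpha (G * pr / (N0 * B)) (G * pd / (N0 * B)) (G * ps / (N0 * B))
  = B * Rt / reduced_cost Rt (pr + pd) ps (s G) K.
Proof.
  intros HG HK M.
  pose proof (cost_scale_pos G HG); pose proof (rate_term_pos Rt HRt K HK).
  assert (HM : M - K = s G * rate_term Rt K / pr) by (unfold M; ring).
  rewrite scaled_zeta_csi, HM by (try assumption; unfold M;
    assert (0 < s G * rate_term Rt K / pr) by (apply Rdiv_lt_0_compat; nra); lra).
  unfold reduced_cost; f_equal; field; split; lra.
Qed.

Lemma K_upper_scaled (G : R) : 0 < G ->
  K_upper (G * pr / (N0 * B)) (G * pd / (N0 * B)) (G * C0 / N0) T = Km.
Proof.
  intros HG; unfold K_upper, Km, K_max.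
  f_equal; [f_equal|]; field; repeat split; lra.
Qed.

Lemma eta'_csi_bounds (G K0 W : R) : 0 < G -> 1 <= K0 <= Km -> 0 < W ->
  (forall K, 1 <= K <= Km -> W <= reduced_cost Rt (pr + pd) ps (s G) K) ->
  B * Rt / reduced_cost Rt (pr + pd) ps (s G) K0
    <= eta'_csi Rt alpha N0 B T pr pd ps C0 G <= B * Rt / W.
Proof.
  intros HG HK0 HW HWle.
  assert (HGN : 0 < G / N0) by (apply Rdiv_lt_0_compat; lra).
  pose proof (cost_scale_pos G HG); pose proof (rate_term_pos Rt HRt K0 ltac:(lra)).
  unfold eta'_csi, zeta'_csi.
  set (S := zeta_values _ _ _ _ _ _ _).
  set (zeta := fun M K => zeta_csi M K Rt alpha (G * pr / (N0 * B)) (G * pd / (N0 * B))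
                                   (G * ps / (N0 * B))).
  set (M0 := K0 + s G * rate_term Rt K0 / pr).
  assert (HM0 : K0 < M0)
    by (unfold M0; assert (0 < s G * rate_term Rt K0 / pr) by (apply Rdiv_lt_0_compat; nra); lra).
  assert (HS : S (zeta M0 K0)).
  { exists M0, K0; rewrite K_upper_scaled by exact HG; repeat split; lra. }
  assert (Hub : forall y, S y -> y <= N0 / G * (B * Rt / W)).
  { intros y [M [K [HK1 [HKm [HKM ->]]]]]; rewrite K_upper_scaled in HKm by exact HG.
    pose proof (scaled_zeta_csi_le G M K HG ltac:(lra) HKM) as Hle.
    specialize (HWle K (conj HK1 HKm)).
    assert (B * Rt / reduced_cost Rt (pr + pd) ps (s G) K <= B * Rt / W)
      by (apply Rmult_le_compat_l; [nra | apply Rinv_le_contravar; lra]).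
    apply (Rmult_le_reg_l (G / N0)); [exact HGN|].
    replace (G / N0 * (N0 / G * (B * Rt / W))) with (B * Rt / W) by (field; lra).
    unfold zeta; lra. }
  destruct (lub_between S _ _ HS Hub) as [Hlo Hhi].
  split.
  - rewrite <- (scaled_zeta_csi_opt G K0 HG ltac:(lra)).
    apply Rmult_le_compat_l; [lra | exact Hlo].
  - replace (B * Rt / W) with (G / N0 * (N0 / G * (B * Rt / W))) by (field; lra).
    apply Rmult_le_compat_l; [lra | exact Hhi].
Qed.

Lemma descent_margin_at_1 (G : R) : 0 < G ->
  G < N0 * B / pr * (alpha / ((1 + pd / pr) ^ 2 * Rt) * g Rt ^ 2) ->
  0 < descent_margin Rt (pr + pd) (s G) 1.
Proof.
  intros HG Hthr; unfold descent_margin; rewrite Rdiv_1_r, cost_scale_threshold by exact HG.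
  apply Rmult_lt_0_compat; [apply Rdiv_lt_0_compat; [apply Rmult_lt_0_compat; [apply pow_lt|] |] |]; lra.
Qed.

Lemma descent_margin_at_Kmax (G : R) : 0 < G -> 0 < Km ->
  G > N0 * B / pr * (3 * alpha / (4 * (1 + pd / pr) ^ 2 * Rt) * g (4 * Rt / (3 * Km)) ^ 2) ->
  descent_margin Rt (pr + pd) (s G) Km < 0.
Proof.
  intros HG HKm Hthr.
  set (x := Rt / Km).
  assert (Hx : 0 < x) by (apply Rdiv_lt_0_compat; lra).
  replace (4 * Rt / (3 * Km)) with (4 / 3 * x) in Hthr by (unfold x; field; lra).
  (* [g^2(x)/x] increases, so [g^2(x) < 3/4 g^2(4x/3)] *)
  assert (Hg : g x ^ 2 < 3 / 4 * g (4 / 3 * x) ^ 2)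
    by (pose proof (g_sq_mul_lt x (4 / 3 * x) Hx ltac:(lra)); nra).
  pose proof (cost_scale_threshold G (3 / 4 * g (4 / 3 * x) ^ 2) HG) as Hthr'.
  replace (alpha / ((1 + pd / pr) ^ 2 * Rt) * (3 / 4 * g (4 / 3 * x) ^ 2))
    with (3 * alpha / (4 * (1 + pd / pr) ^ 2 * Rt) * g (4 / 3 * x) ^ 2) in Hthr'
    by (assert (0 < pd / pr) by (apply Rdiv_lt_0_compat; lra); field; lra).
  assert (0 < (pr + pd) ^ 2 * Rt / G)
    by (apply Rdiv_lt_0_compat; [apply Rmult_lt_0_compat; [apply pow_lt|] |]; lra).
  assert (0 < s G ^ 2) by (apply pow_lt, cost_scale_pos, HG).
  unfold descent_margin; fold x; nra.
Qed.

Section Envelope.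

Variables (Gc K0 : R).
Hypotheses (HGc : 0 < Gc) (HK0 : 1 <= K0 <= Km)
  (Hroot : descent_margin Rt (pr + pd) (s Gc) K0 = 0).

Lemma reduced_cost_near_min (eps : R) : 0 < eps -> exists del, 0 < del /\
  forall G, Rabs (G - Gc) < del -> 0 < G /\ forall K, 1 <= K <= Km ->
    reduced_cost Rt (pr + pd) ps (s G) K0 - eps * Rabs (G - Gc)
      <= reduced_cost Rt (pr + pd) ps (s G) K.
Proof.
  intros Heps.
  destruct (is_derive_locally_lipschitz _ _ _ (cost_scale_derive Gc HGc)) as [ds [Hds Hlip]].
  set (L := Rabs (- s Gc / (2 * Gc)) + 1) in Hlip.
  assert (HL : 0 < L) by (unfold L; pose proof (Rabs_pos (- s Gc / (2 * Gc))); lra).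
  destruct (reduced_cost_perturbed Rt (pr + pd) ps HRt ltac:(lra) (s Gc) K0
              (cost_scale_pos Gc HGc) ltac:(lra) Hroot Km (eps / L)
              ltac:(apply Rdiv_lt_0_compat; lra)) as [dp [Hdp Hpert]].
  exists (Rmin (Rmin Gc ds) (dp / L)); split.
  { repeat apply Rmin_glb_lt; try apply Rdiv_lt_0_compat; lra. }
  intros G HG.
  pose proof (Rmin_l (Rmin Gc ds) (dp / L)); pose proof (Rmin_r (Rmin Gc ds) (dp / L));
    pose proof (Rmin_l Gc ds); pose proof (Rmin_r Gc ds).
  split; [pose proof (Rle_abs (Gc - G)); rewrite Rabs_minus_sym in HG; lra|].
  specialize (Hlip G ltac:(lra)).
  pose proof (Rabs_pos (G - Gc)).
  assert (Hds' : Rabs (s G - s Gc) < dp).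
  { apply (Rle_lt_trans _ _ _ Hlip).
    replace dp with (L * (dp / L)) by (field; lra).
    apply Rmult_lt_compat_l; lra. }
  intros K HK; specialize (Hpert (s G) K Hds' HK).
  assert (eps / L * Rabs (s G - s Gc) <= eps * Rabs (G - Gc)).
  { replace (eps * Rabs (G - Gc)) with (eps / L * (L * Rabs (G - Gc))) by (field; lra).
    apply Rmult_le_compat_l; [apply Rlt_le, Rdiv_lt_0_compat |]; lra. }
  lra.
Qed.

Lemma eta'_csi_near_pinned (eps : R) : 0 < eps -> exists del, 0 < del /\
  forall G, Rabs (G - Gc) < del ->
    Rabs (eta'_csi Rt alpha N0 B T pr pd ps C0 G
          - B * Rt / reduced_cost Rt (pr + pd) ps (s G) K0) <= eps * Rabs (G - Gc).
Proof.
  intros Heps.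
  set (eps' := eps / (4 * (B * Rt) / ps ^ 2)).
  assert (Heps' : 0 < eps')
    by (apply Rdiv_lt_0_compat; [lra | apply Rdiv_lt_0_compat; [nra | apply pow_lt; lra]]).
  destruct (reduced_cost_near_min eps' Heps') as [d [Hd Hnear]].
  exists (Rmin d (ps / (2 * eps'))); split; [apply Rmin_glb_lt; [| apply Rdiv_lt_0_compat]; lra|].
  intros G HG.
  destruct (Hnear G (Rlt_le_trans _ _ _ HG (Rmin_l _ _))) as [HG0 Hmin].
  set (F := reduced_cost Rt (pr + pd) ps (s G) K0) in *.
  set (W := F - eps' * Rabs (G - Gc)).
  assert (HF : ps <= F).
  { unfold F, reduced_cost; pose proof (cost_scale_pos G HG0);
      pose proof (rate_term_pos Rt HRt K0 ltac:(lra)); nra. }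
  assert (HW : ps / 2 <= W).
  { pose proof (Rlt_le_trans _ _ _ HG (Rmin_r _ _)) as HG'.
    assert (eps' * Rabs (G - Gc) <= ps / 2).
    { replace (ps / 2) with (eps' * (ps / (2 * eps'))) by (field; lra).
      apply Rmult_le_compat_l; lra. }
    unfold W; lra. }
  destruct (eta'_csi_bounds G K0 W HG0 HK0 ltac:(lra) Hmin) as [Hlo Hhi].
  assert (HWF : ps / 2 <= W <= F)
    by (split; [exact HW | unfold W; pose proof (Rabs_pos (G - Gc)); nra]).
  pose proof (Rdiv_sub_Rdiv_le (B * Rt) W F (ps / 2) ltac:(nra) ltac:(lra) HWF) as Hdiff.
  replace (F - W) with (eps' * Rabs (G - Gc)) in Hdiff by (unfold W; ring).
  replace (B * Rt / (ps / 2) ^ 2 * (eps' * Rabs (G - Gc))) with (eps * Rabs (G - Gc))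
    in Hdiff by (unfold eps'; field; lra).
  fold F in Hlo; rewrite Rabs_pos_eq; lra.
Qed.

Lemma pinned_eta_derive :
  is_derive (fun G => B * Rt / reduced_cost Rt (pr + pd) ps (s G) K0) Gc
    (B * Rt * rate_term Rt K0 * s Gc / (Gc * reduced_cost Rt (pr + pd) ps (s Gc) K0 ^ 2)).
Proof.
  pose proof (cost_scale_derive Gc HGc) as Hs.
  pose proof (cost_scale_pos Gc HGc); pose proof (rate_term_pos Rt HRt K0 ltac:(lra)).
  assert (0 < reduced_cost Rt (pr + pd) ps (s Gc) K0) by (unfold reduced_cost; nra).
  unfold reduced_cost in *.
  auto_derive.
  - split; [exists (- s Gc / (2 * Gc)); exact Hs | lra].
  - replace (Derive (fun x => s x) Gc) with (- s Gc / (2 * Gc))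
      by (symmetry; apply is_derive_unique, Hs).
    field; lra.
Qed.

End Envelope.

End Scaling.

Theorem theorem5 (alpha Rt N0 B Tc pr pd ps C0 Gc : R) :
  alpha > 1 -> Rt > 0 -> N0 > 0 -> B > 0 -> Tc > 0 -> B * Tc > 1 ->
  pr > 0 -> pd > 0 -> ps > 0 -> C0 > 0 ->
  K_max (B * Tc) (pd / pr) (C0 * B / pr) > 10 ->
  Gc > 0 ->
  Gc > N0 * B / pr * (alpha / (2 * (ps / pr))) ->
  Gc > N0 * B / pr * (3 * alpha / (4 * (1 + pd / pr) ^ 2 * Rt)
         * (g (4 * Rt / (3 * K_max (B * Tc) (pd / pr) (C0 * B / pr)))) ^ 2) ->
  Gc < N0 * B / pr * (alpha / ((1 + pd / pr) ^ 2 * Rt) * (g Rt) ^ 2) ->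
  ex_derive (eta'_csi Rt alpha N0 B (B * Tc) pr pd ps C0) Gc /\
  Derive (eta'_csi Rt alpha N0 B (B * Tc) pr pd ps C0) Gc > 0.
Proof.
  intros Halpha HRt HN0 HB _ _ Hpr Hpd Hps HC0 HKm HGc _ Hbelow Habove.
  set (Km := K_max (B * Tc) (pd / pr) (C0 * B / pr)) in *.
  set (s := cost_scale alpha pr N0 B).
  assert (Halpha0 : 0 < alpha) by lra.
  assert (HKm1 : 1 < Km) by lra.
  pose proof (descent_margin_at_1 _ _ _ _ _ _ Halpha0 HRt HN0 HB Hpr Hpd _ HGc Habove) as H1.
  pose proof (descent_margin_at_Kmax _ _ _ _ (B * Tc) _ _ C0 Halpha0 HRt HN0 HB Hpr Hpd _ HGc
                ltac:(fold Km; lra) Hbelow) as HKm0.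
  destruct (descent_margin_root _ _ HRt (s Gc) Km HKm1 H1 HKm0) as [K0 [HK0 Hroot]].
  assert (Heta : is_derive (eta'_csi Rt alpha N0 B (B * Tc) pr pd ps C0) Gc
           (B * Rt * rate_term Rt K0 * s Gc / (Gc * reduced_cost Rt (pr + pd) ps (s Gc) K0 ^ 2))).
  { apply (is_derive_squeeze _ _ _ _
             (pinned_eta_derive _ _ _ _ (B * Tc) _ _ _ C0 Halpha0 HRt HN0 HB Hpr Hpd Hps Gc K0 HGc
                ltac:(fold Km; lra))).
    exact (eta'_csi_near_pinned _ _ _ _ (B * Tc) _ _ _ _ Halpha0 HRt HN0 HB Hpr Hpd Hps HC0 Gc K0 HGc
             ltac:(fold Km; lra) Hroot). }
  split; [eexists; exact Heta|].
  rewrite (is_derive_unique _ _ _ Heta).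
  assert (0 < s Gc) by (apply cost_scale_pos; assumption).
  pose proof (rate_term_pos Rt HRt K0 ltac:(lra)).
  assert (0 < reduced_cost Rt (pr + pd) ps (s Gc) K0) by (unfold reduced_cost; nra).
  apply Rdiv_lt_0_compat; [repeat apply Rmult_lt_0_compat | apply Rmult_lt_0_compat; [| apply pow_lt]];
    lra.
Qed.
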